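(* The parallel reduction $\Rightarrow$ on $PPC_{EM}$ terms has the diamond property: for all terms $t,t_1,t_2$, if $t\Rightarrow t_1$ and $t\Rightarrow t_2$, then there exists a term $t_3$ with $t_1\Rightarrow t_3$ and $t_2\Rightarrow t_3$.
   Context: **Terms of $PPC_{EM}$.** Names $x,y,\dots$; $\theta$ ranges over finite lists of names. Terms: $$t ::= x \mid \hat{x} \mid t\,t \mid t\bullet t \mid [\theta]\,p\to b \mid b\langle\theta\vdash\mu\mid\Delta\rangle.$$ Here $x$ is a variable occurrence and $\hat x$ a matchable occurrence of a name. In a matching $b\langle\theta\vdash\mu\mid\Delta\rangle$, $\mu$ is a decided match, i.e. either $\bot$ or a substitution (a finite map from names to terms), and $\Delta$ is a finite multiset of pairs of terms. The notation $(a,p)\Delta$ is the multiset union of $\Delta$ with $\{(a,p)\}$. As a term, $\bot$ denotes a fixed closed normal term without $\bullet$ or matchings. **Binding and free names.** In $[\theta]p\to b$, $\theta$ binds matchables $\hat x$ ($x\in\theta$) in $p$ and variables $x\in\theta$ in $b$. In $b\langle\theta\vdash\mu\mid\Delta\rangle$, $\theta$ binds variables of $b$ and matchables in the second components of the pairs of $\Delta$. $\mathrm{fn}(a)$ is the set of free names of $a$. Terms are taken modulo $\alpha$-conversion, with all bound names distinct and disjoint from free names. **Substitution.** $t^\sigma$ is capture-avoiding replacement of free variables $x\in\mathrm{dom}(\sigma)$ by $\sigma(x)$, propagating into $\mathrm{codom}\,\mu$ and into $\Delta$. **Disjoint union $\uplus$ of decided matches.** It is commutative; $\bot\uplus\mu=\bot$;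 $\sigma_1\uplus\sigma_2=\bot$ if the domains overlap, and otherwise it is their union. **Failure pairs.** Call $(a,p)$ a *failure pair* (relative to $\theta$) if it is one of: - $(\hat y,\hat x)$ with $x\notin\theta$ and $x\ne y$; - $(a_1\bullet a_2,\hat x)$ with $x\notin\theta$; - $([\theta_a]p_a\to b_a,\hat x)$ with $x\notin\theta$; - $(\hat x,p_1\bullet p_2)$; - $([\theta_a]p_a\to b_a,p_1\bullet p_2)$; - $(a,[\theta_p]p_p\to b_p)$. **Parallel reduction $\Rightarrow$.** It is defined inductively on terms. It is extended to decided matches by $\bot\Rightarrow\bot$ and $\sigma\Rightarrow\sigma'$ iff $\mathrm{dom}\,\sigma=\mathrm{dom}\,\sigma'$ and $\sigma(x)\Rightarrow\sigma'(x)$ for all $x$. It is extended to multisets of pairs elementwise, componentwise. The rules are: - (Id) $t\Rightarrow t$. - (Cgr) If $t_1\Rightarrow t_1'$ and $t_2\Rightarrow t_2'$, then $t_1t_2\Rightarrow t_1't_2'$ and $t_1\bullet t_2\Rightarrow t_1'\bullet t_2'$. - (Cgr) If $p\Rightarrow p'$ and $b\Rightarrow b'$, then $[\theta]p\to b\Rightarrow[\theta]p'\to b'$. - (Cgr) If $b\Rightarrow b'$, $\mu\Rightarrow\mu'$ and $\Delta\Rightarrow\Delta'$, then $b\langle\theta\vdash\mu\mid\Delta\rangle\Rightarrow b'\langle\theta\vdash\mu'\mid\Delta'\rangle$. - (Init) If $p\Rightarrow p'$, $b\Rightarrow b'$ and $a\Rightarrow a'$, then $([\theta]p\to b)a\Rightarrow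 b'\langle\theta\vdash\emptyset\mid(a',p')\rangle$. - (Struct) If $t\Rightarrow t'$, then $\hat x\,t\Rightarrow\hat x\bullet t'$. - (Struct) If $t_i\Rightarrow t_i'$ for $i=1,2,3$, then $(t_1\bullet t_2)t_3\Rightarrow(t_1'\bullet t_2')\bullet t_3'$. - (Match) If $b\Rightarrow b'$, $\mu\Rightarrow\mu'$, $a\Rightarrow a'$ and $\Delta\Rightarrow\Delta'$, with $x\in\theta$ and $\mathrm{fn}(a)\cap\theta=\emptyset$, then $b\langle\theta\vdash\mu\mid(a,\hat x)\Delta\rangle\Rightarrow b'\langle\theta\vdash\mu'\uplus\{x\mapsto a'\}\mid\Delta'\rangle$. - (Match) If $b\Rightarrow b'$, $\mu\Rightarrow\mu'$ and $\Delta\Rightarrow\Delta'$, with $x\notin\theta$, then $b\langle\theta\vdash\mu\mid(\hat x,\hat x)\Delta\rangle\Rightarrow b'\langle\theta\vdash\mu'\mid\Delta'\rangle$. - (Match) If $b\Rightarrow b'$, $\mu\Rightarrow\mu'$, $\Delta\Rightarrow\Delta'$, $a_i\Rightarrow a_i'$ and $p_i\Rightarrow p_i'$, then $b\langle\theta\vdash\mu\mid(a_1\bullet a_2,p_1\bullet p_2)\Delta\rangle\Rightarrow b'\langle\theta\vdash\mu'\mid(a_1',p_1')(a_2',p_2')\Delta'\rangle$. - (Match) If $b\Rightarrow b'$ and $\Delta\Rightarrow\Delta'$, with $(a,p)$ a failure pair, then $b\langle\theta\vdash\mu\mid(a,p)\Delta\rangle\Rightarrow b'\langle\theta\vdash\bot\mid\Delta'\rangle$.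 - (Res) If $b\Rightarrow b'$ and $\sigma\Rightarrow\sigma'$, with $\mathrm{dom}\,\sigma=\theta$, then $b\langle\theta\vdash\sigma\mid\emptyset\rangle\Rightarrow(b')^{\sigma'}$. - (Res) If $\mathrm{dom}\,\sigma\ne\theta$, then $b\langle\theta\vdash\sigma\mid\emptyset\rangle\Rightarrow\bot$. - (Res) $b\langle\theta\vdash\bot\mid\Delta\rangle\Rightarrow\bot$. *)

From Stdlib Require Import List Arith PeanoNat.
Import ListNotations.

(* Two independent de Bruijn index spaces: one for variable occurrences
   (x) and one for matchable occurrences (x^).  A binder theta of length k
   binds k names; in  [theta] p -> b  it binds matchables 0..k-1 of p and
   variables 0..k-1 of b; in  b<theta |- mu | Delta>  it binds variables
   0..k-1 of b and matchables 0..k-1 of the second components of Delta.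
   Decided matches: None = bottom; Some s = the substitution whose
   domain is {x | nth x s = Some _} (keys refer to the names of theta
   when < k).  Multisets of pairs are lists; rules act on an element at
   any position. *)

Inductive term : Type :=
| Var : nat -> term
| Mat : nat -> term
| App : term -> term -> term
| Dat : term -> term -> term
| Abs : nat -> term -> term -> term           (* [theta] p -> b, |theta| = k *)
| Mtc : term -> nat -> option (list (option term)) -> list (term * term) -> term.
                                              (* b <theta |- mu | Delta> *)

Definition dmatch := option (list (option term)).

(* the fixed closed normal term  [x] x^ -> x  used for bottom *)
Definition botT : term := Abs 1 (Mat 0) (Var 0).

Definition up (k : nat) (f : nat -> nat) (i : nat) : nat :=
  if i <? k then i else k + f (i - k).

Fixpoint ren (rv rm : nat -> nat) (t : term) : term :=
  match t with
  | Var i => Var (rv i)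
  | Mat i => Mat (rm i)
  | App t1 t2 => App (ren rv rm t1) (ren rv rm t2)
  | Dat t1 t2 => Dat (ren rv rm t1) (ren rv rm t2)
  | Abs k p b => Abs k (ren rv (up k rm) p) (ren (up k rv) rm b)
  | Mtc b k mu D =>
      Mtc (ren (up k rv) rm b) k
          (option_map (map (option_map (ren rv rm))) mu)
          (map (fun ap => (ren rv rm (fst ap), ren rv (up k rm) (snd ap))) D)
  end.

Definition upv (k : nat) (sv : nat -> term) (i : nat) : term :=
  if i <? k then Var i else ren (fun j => k + j) (fun j => j) (sv (i - k)).

Definition upm (k : nat) (sv : nat -> term) (i : nat) : term :=
  ren (fun j => j) (fun j => k + j) (sv i).

Fixpoint subst (sv : nat -> term) (t : term) : term :=
  match t with
  | Var i => sv i
  | Mat i => Mat i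
  | App t1 t2 => App (subst sv t1) (subst sv t2)
  | Dat t1 t2 => Dat (subst sv t1) (subst sv t2)
  | Abs k p b => Abs k (subst (upm k sv) p) (subst (upv k sv) b)
  | Mtc b k mu D =>
      Mtc (subst (upv k sv) b) k
          (option_map (map (option_map (subst sv))) mu)
          (map (fun ap => (subst sv (fst ap), subst (upm k sv) (snd ap))) D)
  end.

(* b^sigma where b lives under the binder theta (|theta| = k), dom sigma = theta *)
Definition inst (k : nat) (s : list (option term)) (b : term) : term :=
  subst (fun i => if i <? k then
                    match nth_error s i with Some (Some t) => t | _ => botT end
                  else Var (i - k)) b.

Definition dom_is (k : nat) (s : list (option term)) : Prop :=
  forall i, nth i s None <> None <-> i < k.

Fixpoint merge (l1 l2 : list (option term)) : option (list (option term)) :=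
  match l1, l2 with
  | [], l => Some l
  | l, [] => Some l
  | o1 :: r1, o2 :: r2 =>
      match o1, o2 with
      | Some _, Some _ => None
      | Some _, None => option_map (cons o1) (merge r1 r2)
      | None, _ => option_map (cons o2) (merge r1 r2)
      end
  end.

Definition dunion (m1 m2 : dmatch) : dmatch :=
  match m1, m2 with
  | Some l1, Some l2 => merge l1 l2
  | _, _ => None
  end.

Definition single (x : nat) (a : term) : list (option term) :=
  repeat None x ++ [Some a].

Inductive failure (k : nat) : term -> term -> Prop :=
| fail_mm : forall y x, k <= x -> x - k <> y -> failure k (Mat y) (Mat x)
| fail_dm : forall a1 a2 x, k <= x -> failure k (Dat a1 a2) (Mat x)
| fail_am : forall j pa ba x, k <= x -> failure k (Abs j pa ba) (Mat x)
| fail_md : forall x p1 p2, failure k (Mat x) (Dat p1 p2)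
| fail_ad : forall j pa ba p1 p2, failure k (Abs j pa ba) (Dat p1 p2)
| fail_xa : forall a j pp bp, failure k a (Abs j pp bp).

Inductive pr : term -> term -> Prop :=
| pr_id : forall t, pr t t
| pr_app : forall t1 t1' t2 t2', pr t1 t1' -> pr t2 t2' -> pr (App t1 t2) (App t1' t2')
| pr_dat : forall t1 t1' t2 t2', pr t1 t1' -> pr t2 t2' -> pr (Dat t1 t2) (Dat t1' t2')
| pr_abs : forall k p p' b b', pr p p' -> pr b b' -> pr (Abs k p b) (Abs k p' b')
| pr_mtc : forall b b' k mu mu' D D',
    pr b b' -> pr_dm mu mu' -> pr_D D D' -> pr (Mtc b k mu D) (Mtc b' k mu' D')
| pr_init : forall k p p' b b' a a',
    pr p p' -> pr b b' -> pr a a' ->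
    pr (App (Abs k p b) a) (Mtc b' k (Some []) [(a', p')])
| pr_struct_m : forall x t t', pr t t' -> pr (App (Mat x) t) (Dat (Mat x) t')
| pr_struct_d : forall t1 t1' t2 t2' t3 t3',
    pr t1 t1' -> pr t2 t2' -> pr t3 t3' ->
    pr (App (Dat t1 t2) t3) (Dat (Dat t1' t2') t3')
| pr_match_bind : forall b b' k mu mu' a a' x Dl Dl' Dr Dr',
    x < k ->
    pr b b' -> pr_dm mu mu' -> pr a a' -> pr_D Dl Dl' -> pr_D Dr Dr' ->
    pr (Mtc b k mu (Dl ++ (a, Mat x) :: Dr))
       (Mtc b' k (dunion mu' (Some (single x a'))) (Dl' ++ Dr'))
| pr_match_same : forall b b' k mu mu' x y Dl Dl' Dr Dr',
    k <= x -> x - k = y ->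
    pr b b' -> pr_dm mu mu' -> pr_D Dl Dl' -> pr_D Dr Dr' ->
    pr (Mtc b k mu (Dl ++ (Mat y, Mat x) :: Dr)) (Mtc b' k mu' (Dl' ++ Dr'))
| pr_match_dat : forall b b' k mu mu' a1 a1' a2 a2' p1 p1' p2 p2' Dl Dl' Dr Dr',
    pr b b' -> pr_dm mu mu' -> pr_D Dl Dl' -> pr_D Dr Dr' ->
    pr a1 a1' -> pr a2 a2' -> pr p1 p1' -> pr p2 p2' ->
    pr (Mtc b k mu (Dl ++ (Dat a1 a2, Dat p1 p2) :: Dr))
       (Mtc b' k mu' (Dl' ++ (a1', p1') :: (a2', p2') :: Dr'))
| pr_match_fail : forall b b' k mu a p Dl Dl' Dr Dr',
    failure k a p -> pr b b' -> pr_D Dl Dl' -> pr_D Dr Dr' ->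
    pr (Mtc b k mu (Dl ++ (a, p) :: Dr)) (Mtc b' k None (Dl' ++ Dr'))
| pr_res : forall b b' k s s',
    dom_is k s -> pr b b' -> pr_os s s' ->
    pr (Mtc b k (Some s) []) (inst k s' b')
| pr_res_dom : forall b k s,
    ~ dom_is k s -> pr (Mtc b k (Some s) []) botT
| pr_res_bot : forall b k D, pr (Mtc b k None D) botT
with pr_dm : dmatch -> dmatch -> Prop :=
| prdm_bot : pr_dm None None
| prdm_some : forall s s', pr_os s s' -> pr_dm (Some s) (Some s')
with pr_os : list (option term) -> list (option term) -> Prop :=
| pros_nil : pr_os [] []
| pros_none : forall s s', pr_os s s' -> pr_os (None :: s) (None :: s')
| pros_some : forall t t' s s', pr t t' -> pr_os s s' -> pr_os (Some t :: s) (Some t' :: s')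
with pr_D : list (term * term) -> list (term * term) -> Prop :=
| prD_nil : pr_D [] []
| prD_cons : forall a a' p p' D D',
    pr a a' -> pr p p' -> pr_D D D' -> pr_D ((a, p) :: D) ((a', p') :: D').

(* Tait-Martin-Löf style: the diamond property is proved for every source term by
   induction on its structure, comparing the last rules of the two reductions.
   Congruence against a contraction, and two contractions of the same redex, are
   closed with the induction hypotheses on the immediate subterms; the one
   non-local ingredient is that parallel reduction is stable under substitution,
   needed for the (Res) rule.  Inside a matching, (Match) steps on different pairs
   of Delta commute because disjoint union of decided matches is associative and
   commutative, failure pairs stay failure pairs since reduction preserves head
   constructors, and once the decided match is bot (or has the wrong domain) every
   reduct reduces to bot. *)

From Stdlib Require Import List PeanoNat Lia FinFun.
Import ListNotations.

Definition on_some (P : term -> Prop) (o : option term) : Prop :=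
  match o with Some t => P t | None => True end.

Definition on_dmatch (P : term -> Prop) (mu : dmatch) : Prop :=
  match mu with Some s => Forall (on_some P) s | None => True end.

Definition on_pairs (P : term -> Prop) (D : list (term * term)) : Prop :=
  Forall (fun q => P (fst q) /\ P (snd q)) D.

Section TermInd.
Variable P : term -> Prop.
Hypothesis HVar : forall i, P (Var i).
Hypothesis HMat : forall i, P (Mat i).
Hypothesis HApp : forall t1 t2, P t1 -> P t2 -> P (App t1 t2).
Hypothesis HDat : forall t1 t2, P t1 -> P t2 -> P (Dat t1 t2).
Hypothesis HAbs : forall k p b, P p -> P b -> P (Abs k p b).
Hypothesis HMtc : forall b k mu D,
  P b -> on_dmatch P mu -> on_pairs P D -> P (Mtc b k mu D).

Fixpoint term_nested_ind (t : term) : P t :=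
  match t with
  | Var i => HVar i
  | Mat i => HMat i
  | App t1 t2 => HApp t1 t2 (term_nested_ind t1) (term_nested_ind t2)
  | Dat t1 t2 => HDat t1 t2 (term_nested_ind t1) (term_nested_ind t2)
  | Abs k p b => HAbs k p b (term_nested_ind p) (term_nested_ind b)
  | Mtc b k mu D =>
      let fix opts (s : list (option term)) : Forall (on_some P) s :=
        match s with
        | [] => Forall_nil _
        | o :: s' =>
            Forall_cons o
              (match o as o return on_some P o with
               | Some u => term_nested_ind u
               | None => I
               end) (opts s')
        end in
      let fix pairs (D : list (term * term)) : on_pairs P D :=
        match D with
        | [] => Forall_nil _
        | (a, p) :: D' =>
            Forall_cons (a, p) (conj (term_nested_ind a) (term_nested_ind p)) (pairs D')
        end in
      HMtc b k mu D (term_nested_ind b)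
        (match mu as m return on_dmatch P m with
         | Some s => opts s
         | None => I
         end) (pairs D)
  end.
End TermInd.

Lemma up_lt k f i : i < k -> up k f i = i.
Proof. unfold up; destruct (Nat.ltb_spec i k); lia. Qed.

Lemma up_ge k f i : k <= i -> up k f i = k + f (i - k).
Proof. unfold up; destruct (Nat.ltb_spec i k); lia. Qed.

Lemma up_shift k f j : up k f (k + j) = k + f j.
Proof. rewrite up_ge by lia; do 2 f_equal; lia. Qed.

Lemma up_comp k f g h :
  (forall i, f (g i) = h i) -> forall i, up k f (up k g i) = up k h i.
Proof.
  intros E i; destruct (Nat.lt_ge_cases i k).
  - rewrite (up_lt k g), !up_lt; auto.
  - rewrite (up_ge k g i), up_shift, (up_ge k h i), E by lia; reflexivity.
Qed.

Lemma up_id k f : (forall i, f i = i) -> forall i, up k f i = i.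
Proof. intros E i; unfold up; destruct (Nat.ltb_spec i k); rewrite ?E; lia. Qed.

Lemma ren_ren t : forall rv rm rv' rm' rv'' rm'',
  (forall i, rv (rv' i) = rv'' i) -> (forall i, rm (rm' i) = rm'' i) ->
  ren rv rm (ren rv' rm' t) = ren rv'' rm'' t.
Proof.
  induction t as [| | | | |b k mu D IHb IHmu IHD] using term_nested_ind;
    intros rv rm rv' rm' rv'' rm'' Ev Em; simpl; f_equal; auto using up_comp.
  - destruct mu as [s|]; simpl in *; f_equal; rewrite map_map.
    apply map_ext_Forall; refine (Forall_impl _ _ IHmu).
    intros [u|] Hu; simpl in *; f_equal; auto.
  - rewrite map_map; apply map_ext_Forall; refine (Forall_impl _ _ IHD).
    intros [a p] [Ha Hp]; simpl in *; f_equal; auto using up_comp.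
Qed.

Lemma ren_id t : forall rv rm,
  (forall i, rv i = i) -> (forall i, rm i = i) -> ren rv rm t = t.
Proof.
  induction t as [| | | | |b k mu D IHb IHmu IHD] using term_nested_ind;
    intros rv rm Ev Em; simpl; f_equal; auto using up_id.
  - destruct mu as [s|]; simpl in *; f_equal.
    rewrite <- (map_id s) at 2; apply map_ext_Forall; refine (Forall_impl _ _ IHmu).
    intros [u|] Hu; simpl in *; f_equal; auto.
  - rewrite <- (map_id D) at 2; apply map_ext_Forall; refine (Forall_impl _ _ IHD).
    intros [a p] [Ha Hp]; simpl in *; f_equal; auto using up_id.
Qed.

Lemma ren_upm k rv rm sg sg' : (forall i, ren rv rm (sg i) = sg' i) ->
  forall i, ren rv (up k rm) (upm k sg i) = upm k sg' i.
Proof.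
  intros E i; unfold upm; rewrite <- E, !(ren_ren _ _ _ _ _ rv (fun j => k + rm j));
    auto using up_shift.
Qed.

Lemma ren_upv k rv rm sg sg' : (forall i, ren rv rm (sg i) = sg' i) ->
  forall i, ren (up k rv) rm (upv k sg i) = upv k sg' i.
Proof.
  intros E i; unfold upv; destruct (Nat.ltb_spec i k); simpl.
  - rewrite up_lt; auto.
  - rewrite <- E, !(ren_ren _ _ _ _ _ (fun j => k + rv j) rm); auto using up_shift.
Qed.

(* [rv0] is only pointwise the identity: that is what survives going under binders
   ([up k rv0]).  The same goes for [rm0] in [subst_ren]. *)
Lemma ren_subst t : forall rv rm rv0 sg sg', (forall i, rv0 i = i) ->
  (forall i, ren rv rm (sg i) = sg' i) ->
  ren rv rm (subst sg t) = subst sg' (ren rv0 rm t).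
Proof.
  induction t as [| | | | |b k mu D IHb IHmu IHD] using term_nested_ind;
    intros rv rm rv0 sg sg' E0 E; simpl; rewrite ?E0; f_equal;
    auto using up_id, ren_upm, ren_upv.
  - destruct mu as [s|]; simpl in *; f_equal; rewrite !map_map.
    apply map_ext_Forall; refine (Forall_impl _ _ IHmu).
    intros [u|] Hu; simpl in *; f_equal; auto.
  - rewrite !map_map; apply map_ext_Forall; refine (Forall_impl _ _ IHD).
    intros [a p] [Ha Hp]; simpl in *; f_equal; auto using ren_upm.
Qed.

Lemma upv_up k rv sg sg' : (forall i, sg (rv i) = sg' i) ->
  forall i, upv k sg (up k rv i) = upv k sg' i.
Proof.
  intros E i; unfold upv; destruct (Nat.ltb_spec i k).
  - rewrite up_lt by auto; destruct (Nat.ltb_spec i k); [reflexivity|lia].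
  - rewrite up_ge by lia; destruct (Nat.ltb_spec (k + rv (i - k)) k); [lia|].
    rewrite <- E; do 3 f_equal; lia.
Qed.

Lemma upm_comp k rv sg sg' : (forall i, sg (rv i) = sg' i) ->
  forall i, upm k sg (rv i) = upm k sg' i.
Proof. intros E i; unfold upm; rewrite E; reflexivity. Qed.

Lemma subst_ren t : forall rv rm0 sg sg', (forall i, rm0 i = i) ->
  (forall i, sg (rv i) = sg' i) -> subst sg (ren rv rm0 t) = subst sg' t.
Proof.
  induction t as [| | | | |b k mu D IHb IHmu IHD] using term_nested_ind;
    intros rv rm0 sg sg' E0 E; simpl; [apply E|rewrite E0|..]; f_equal;
    auto using up_id, upv_up, upm_comp.
  - destruct mu as [s|]; simpl in *; f_equal; rewrite !map_map.
    apply map_ext_Forall; refine (Forall_impl _ _ IHmu).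
    intros [u|] Hu; simpl in *; f_equal; auto.
  - rewrite !map_map; apply map_ext_Forall; refine (Forall_impl _ _ IHD).
    intros [a p] [Ha Hp]; simpl in *; f_equal; auto using up_id, upm_comp.
Qed.

Lemma upm_var k sg : (forall i, sg i = Var i) -> forall i, upm k sg i = Var i.
Proof. intros E i; unfold upm; rewrite E; reflexivity. Qed.

Lemma upv_var k sg : (forall i, sg i = Var i) -> forall i, upv k sg i = Var i.
Proof.
  intros E i; unfold upv; destruct (Nat.ltb_spec i k); [reflexivity|].
  rewrite E; simpl; f_equal; lia.
Qed.

Lemma subst_id t : forall sg, (forall i, sg i = Var i) -> subst sg t = t.
Proof.
  induction t as [| | | | |b k mu D IHb IHmu IHD] using term_nested_ind;
    intros sg E; simpl; [apply E|..]; f_equal; auto using upm_var, upv_var.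
  - destruct mu as [s|]; simpl in *; f_equal.
    rewrite <- (map_id s) at 2; apply map_ext_Forall; refine (Forall_impl _ _ IHmu).
    intros [u|] Hu; simpl in *; f_equal; auto.
  - rewrite <- (map_id D) at 2; apply map_ext_Forall; refine (Forall_impl _ _ IHD).
    intros [a p] [Ha Hp]; simpl in *; f_equal; auto using upm_var.
Qed.

Lemma subst_upm k tau sg th : (forall i, subst tau (sg i) = th i) ->
  forall i, subst (upm k tau) (upm k sg i) = upm k th i.
Proof.
  intros E i; unfold upm; rewrite <- E.
  symmetry; apply (ren_subst _ _ _ (fun j => j)); auto.
Qed.

Lemma subst_upv k tau sg th : (forall i, subst tau (sg i) = th i) ->
  forall i, subst (upv k tau) (upv k sg i) = upv k th i.
Proof.
  intros E i; unfold upv at 2 3; destruct (Nat.ltb_spec i k).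
  - simpl; unfold upv; destruct (Nat.ltb_spec i k); [reflexivity|lia].
  - set (shifted := fun j => ren (fun j => k + j) (fun j => j) (tau j)).
    rewrite <- E, (subst_ren _ _ _ _ shifted), (ren_subst _ _ _ (fun j => j) _ shifted),
      ren_id; auto.
    intro j; unfold upv, shifted; destruct (Nat.ltb_spec (k + j) k); [lia|do 3 f_equal; lia].
Qed.

Lemma subst_subst t : forall tau sg th, (forall i, subst tau (sg i) = th i) ->
  subst tau (subst sg t) = subst th t.
Proof.
  induction t as [| | | | |b k mu D IHb IHmu IHD] using term_nested_ind;
    intros tau sg th E; simpl; [apply E|..]; f_equal; auto using subst_upm, subst_upv.
  - destruct mu as [s|]; simpl in *; f_equal; rewrite !map_map.
    apply map_ext_Forall; refine (Forall_impl _ _ IHmu).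
    intros [u|] Hu; simpl in *; f_equal; auto.
  - rewrite !map_map; apply map_ext_Forall; refine (Forall_impl _ _ IHD).
    intros [a p] [Ha Hp]; simpl in *; f_equal; auto using subst_upm.
Qed.

Definition inst_env (k : nat) (s : list (option term)) (i : nat) : term :=
  if i <? k then match nth_error s i with Some (Some t) => t | _ => botT end
  else Var (i - k).

Lemma inst_subst k s b : inst k s b = subst (inst_env k s) b.
Proof. reflexivity. Qed.

Lemma ren_inst k s b rv rm :
  ren rv rm (inst k s b) = inst k (map (option_map (ren rv rm)) s) (ren (up k rv) rm b).
Proof.
  rewrite !inst_subst, (ren_subst _ _ _ (fun j => j) _ (fun i => ren rv rm (inst_env k s i)))
    by auto.
  replace (ren (up k rv) rm b) with (ren (up k rv) (fun j => j) (ren (fun j => j) rm b))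
    by (apply ren_ren; auto).
  symmetry; apply subst_ren; auto.
  intro i; unfold inst_env; destruct (Nat.ltb_spec i k).
  - rewrite up_lt by auto; destruct (Nat.ltb_spec i k); [|lia].
    rewrite nth_error_map; destruct (nth_error s i) as [[u|]|]; reflexivity.
  - rewrite up_ge by lia; destruct (Nat.ltb_spec (k + rv (i - k)) k); [lia|].
    simpl; do 2 f_equal; lia.
Qed.

Lemma subst_inst k s b sg :
  subst sg (inst k s b) = inst k (map (option_map (subst sg)) s) (subst (upv k sg) b).
Proof.
  rewrite !inst_subst, !(subst_subst _ _ _ (fun i => subst sg (inst_env k s i))); auto.
  intro i; unfold upv, inst_env; destruct (Nat.ltb_spec i k); simpl.
  - destruct (Nat.ltb_spec i k); [|lia].
    rewrite nth_error_map; destruct (nth_error s i) as [[u|]|]; reflexivity.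
  - destruct (Nat.ltb_spec i k); [lia|].
    rewrite (subst_ren _ _ _ _ Var), subst_id; auto.
    intro j; destruct (Nat.ltb_spec (k + j) k); [lia|do 2 f_equal; lia].
Qed.

Scheme pr_mut := Induction for pr Sort Prop
with pr_dm_mut := Induction for pr_dm Sort Prop
with pr_os_mut := Induction for pr_os Sort Prop
with pr_D_mut := Induction for pr_D Sort Prop.

Lemma pr_os_refl s : pr_os s s.
Proof. induction s as [|[u|] s IH]; constructor; auto using pr_id. Qed.

Lemma pr_dm_refl mu : pr_dm mu mu.
Proof. destruct mu; constructor; apply pr_os_refl. Qed.

Lemma pr_D_refl D : pr_D D D.
Proof. induction D as [|[a p] D IH]; constructor; auto using pr_id. Qed.

Lemma up_injective k f : Injective f -> Injective (up k f).
Proof.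
  intros Hf i j E; unfold up in E.
  destruct (Nat.ltb_spec i k), (Nat.ltb_spec j k); try lia.
  apply Nat.add_cancel_l, Hf in E; lia.
Qed.

Lemma failure_ren k a p rv rm : Injective rm ->
  failure k a p -> failure k (ren rv rm a) (ren rv (up k rm) p).
Proof.
  intros Hrm Hf; destruct Hf; simpl; constructor; rewrite ?up_ge by lia; try lia.
  replace (k + rm (x - k) - k) with (rm (x - k)) by lia.
  intro E; apply Hrm in E; lia.
Qed.

Lemma nth_map_option (f : term -> term) s i :
  nth i (map (option_map f) s) None = option_map f (nth i s None).
Proof. change None with (option_map f None) at 1; apply map_nth. Qed.

Lemma dom_is_map k f s : dom_is k (map (option_map f) s) <-> dom_is k s.
Proof.
  unfold dom_is; split; intros H i; rewrite <- H, nth_map_option;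
    destruct (nth i s None); simpl; split; congruence.
Qed.

Lemma merge_map (f : term -> term) l1 l2 :
  merge (map (option_map f) l1) (map (option_map f) l2)
  = option_map (map (option_map f)) (merge l1 l2).
Proof.
  revert l2; induction l1 as [|o1 l1 IH]; intros [|o2 l2]; simpl; auto.
  destruct o1, o2; simpl; rewrite ?IH; auto; destruct (merge l1 l2); auto.
Qed.

Lemma dunion_single_map (f : term -> term) mu x a :
  option_map (map (option_map f)) (dunion mu (Some (single x a)))
  = dunion (option_map (map (option_map f)) mu) (Some (single x (f a))).
Proof.
  destruct mu; simpl; auto.
  rewrite <- merge_map; unfold single; rewrite map_app, map_repeat; reflexivity.
Qed.

Definition map_pairs (f g : term -> term) (D : list (term * term)) :=
  map (fun q => (f (fst q), g (snd q))) D.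

(* Injectivity keeps distinct matchables distinct, so failure pairs survive. *)
Lemma pr_ren t t' : pr t t' -> forall rv rm, Injective rm -> pr (ren rv rm t) (ren rv rm t').
Proof.
  revert t t'.
  apply (pr_mut (fun t t' _ => forall rv rm, Injective rm -> pr (ren rv rm t) (ren rv rm t'))
    (fun mu mu' _ => forall rv rm, Injective rm ->
      pr_dm (option_map (map (option_map (ren rv rm))) mu)
            (option_map (map (option_map (ren rv rm))) mu'))
    (fun s s' _ => forall rv rm, Injective rm ->
      pr_os (map (option_map (ren rv rm)) s) (map (option_map (ren rv rm)) s'))
    (fun D D' _ => forall rv rm rm', Injective rm -> Injective rm' ->
      pr_D (map_pairs (ren rv rm) (ren rv rm') D) (map_pairs (ren rv rm) (ren rv rm') D')));
  intros; simpl; try (constructor; eauto using up_injective; fail); rewrite ?map_app; simpl.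
  - rewrite up_lt, dunion_single_map by auto.
    apply pr_match_bind; eauto using up_injective.
  - rewrite up_ge by auto; subst y.
    apply pr_match_same; eauto using up_injective; lia.
  - apply pr_match_dat; eauto using up_injective.
  - apply pr_match_fail; eauto using up_injective, failure_ren.
  - rewrite ren_inst; apply pr_res; eauto using up_injective.
    apply dom_is_map; auto.
  - apply pr_res_dom; rewrite dom_is_map; auto.
Qed.

Lemma pr_upm k sg sg' : (forall i, pr (sg i) (sg' i)) -> forall i, pr (upm k sg i) (upm k sg' i).
Proof. intros H i; unfold upm; apply pr_ren; auto; intros x y; lia. Qed.

Lemma pr_upv k sg sg' : (forall i, pr (sg i) (sg' i)) -> forall i, pr (upv k sg i) (upv k sg' i).
Proof.
  intros H i; unfold upv; destruct (i <? k); [apply pr_id|].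
  apply pr_ren; auto; intros x y; lia.
Qed.

Lemma pr_subst_env t : forall sg sg', (forall i, pr (sg i) (sg' i)) ->
  pr (subst sg t) (subst sg' t).
Proof.
  induction t as [| | | | |b k mu D IHb IHmu IHD] using term_nested_ind;
    intros sg sg' E; simpl; auto; constructor; auto using pr_upm, pr_upv.
  - destruct mu as [s|]; simpl in *; constructor.
    induction IHmu as [|[u|] s Hu _ IH]; simpl in *; constructor; auto.
  - induction IHD as [|[a p] D [Ha Hp] _ IH]; simpl in *; constructor; auto using pr_upm.
Qed.

Lemma failure_subst k a p sg tau : failure k a p -> failure k (subst sg a) (subst tau p).
Proof. destruct 1; simpl; constructor; auto. Qed.

Lemma pr_subst t t' : pr t t' -> forall sg sg', (forall i, pr (sg i) (sg' i)) ->
  pr (subst sg t) (subst sg' t').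
Proof.
  revert t t'.
  apply (pr_mut (fun t t' _ => forall sg sg', (forall i, pr (sg i) (sg' i)) ->
                   pr (subst sg t) (subst sg' t'))
    (fun mu mu' _ => forall sg sg', (forall i, pr (sg i) (sg' i)) ->
      pr_dm (option_map (map (option_map (subst sg))) mu)
            (option_map (map (option_map (subst sg'))) mu'))
    (fun s s' _ => forall sg sg', (forall i, pr (sg i) (sg' i)) ->
      pr_os (map (option_map (subst sg)) s) (map (option_map (subst sg')) s'))
    (fun D D' _ => forall sg sg' tau tau',
      (forall i, pr (sg i) (sg' i)) -> (forall i, pr (tau i) (tau' i)) ->
      pr_D (map_pairs (subst sg) (subst tau) D) (map_pairs (subst sg') (subst tau') D')));
  intros; simpl; try (constructor; eauto using pr_upm, pr_upv; fail);
    rewrite ?map_app; simpl.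
  - apply pr_subst_env; auto.
  - rewrite dunion_single_map; apply pr_match_bind; eauto using pr_upm, pr_upv.
  - apply pr_match_same; eauto using pr_upm, pr_upv.
  - apply pr_match_dat; eauto using pr_upm, pr_upv.
  - apply pr_match_fail; eauto using pr_upm, pr_upv, failure_subst.
  - rewrite subst_inst; apply pr_res; eauto using pr_upv.
    apply dom_is_map; auto.
  - apply pr_res_dom; rewrite dom_is_map; auto.
Qed.

Lemma pr_inst_env k s s' : pr_os s s' -> forall i, pr (inst_env k s i) (inst_env k s' i).
Proof.
  intros Hs i; unfold inst_env; destruct (i <? k); [|apply pr_id].
  revert i; induction Hs; intros [|i]; simpl; auto using pr_id.
Qed.

Lemma pr_inst k s s' b b' : pr b b' -> pr_os s s' -> pr (inst k s b) (inst k s' b').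
Proof. intros Hb Hs; apply (pr_subst _ _ Hb), pr_inst_env, Hs. Qed.

Lemma merge_comm l1 l2 : merge l1 l2 = merge l2 l1.
Proof.
  revert l2; induction l1 as [|o1 l1 IH]; intros [|o2 l2]; simpl; auto.
  destruct o1, o2; rewrite 1?IH; auto.
Qed.

Lemma merge_nil_r l : merge l [] = Some l.
Proof. destruct l; reflexivity. Qed.

Lemma merge_assoc l1 l2 l3 :
  dunion (merge l1 l2) (Some l3) = dunion (Some l1) (merge l2 l3).
Proof.
  revert l2 l3; induction l1 as [|o1 l1 IH]; intros [|o2 l2] [|o3 l3]; simpl; auto.
  - destruct o2, o3; simpl; destruct (merge l2 l3); reflexivity.
  - destruct o1, o2; simpl; destruct (merge l1 l2); simpl; rewrite ?merge_nil_r; reflexivity.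
  - specialize (IH l2 l3); simpl in IH.
    destruct o1, o2, o3; simpl;
      destruct (merge l1 l2) as [m12|], (merge l2 l3) as [m23|]; simpl in *;
      first [ reflexivity | rewrite IH; reflexivity | rewrite <- IH; reflexivity
            | destruct (merge l1 m23); reflexivity | destruct (merge m12 l3); reflexivity ].
Qed.

Lemma dunion_swap mu l1 l2 :
  dunion (dunion mu (Some l1)) (Some l2) = dunion (dunion mu (Some l2)) (Some l1).
Proof.
  destruct mu as [l|]; simpl; auto.
  rewrite merge_assoc, merge_comm, <- merge_assoc; reflexivity.
Qed.

Lemma pr_os_merge l1 l1' l2 l2' : pr_os l1 l1' -> pr_os l2 l2' ->
  pr_dm (merge l1 l2) (merge l1' l2').
Proof.
  intros H1; revert l2 l2'; induction H1; intros l2 l2' H2; destruct H2; simpl;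
    try (specialize (IHpr_os _ _ H2); destruct IHpr_os; simpl);
    repeat constructor; auto.
Qed.

Lemma pr_os_single x a a' : pr a a' -> pr_os (single x a) (single x a').
Proof. intro H; unfold single; induction x; simpl; repeat constructor; auto. Qed.

Inductive effect := EBind (x : nat) (a : term) | EKeep | EFail.

Definition apply_effect (e : effect) (mu : dmatch) : dmatch :=
  match e with
  | EBind x a => dunion mu (Some (single x a))
  | EKeep => mu
  | EFail => None
  end.

Inductive pr_effect : effect -> effect -> Prop :=
| pr_ebind x a a' : pr a a' -> pr_effect (EBind x a) (EBind x a')
| pr_ekeep : pr_effect EKeep EKeep
| pr_efail : pr_effect EFail EFail.

Lemma pr_dm_apply_effect mu mu' e e' : pr_dm mu mu' -> pr_effect e e' ->
  pr_dm (apply_effect e mu) (apply_effect e' mu').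
Proof.
  intros Hm He; destruct He; simpl; auto using prdm_bot.
  destruct Hm; simpl; auto using prdm_bot, pr_os_merge, pr_os_single.
Qed.

Lemma apply_effect_bot e : apply_effect e None = None.
Proof. destruct e; reflexivity. Qed.

Lemma apply_effect_comm e1 e2 mu :
  apply_effect e1 (apply_effect e2 mu) = apply_effect e2 (apply_effect e1 mu).
Proof. destruct e1, e2; simpl; auto using dunion_swap; destruct mu; reflexivity. Qed.

(* One of the four (Match) rules applied to the pair [q]: its effect on the decided
   match, and the pairs that replace [q]. *)
Inductive match_step (k : nat) : term * term -> effect -> list (term * term) -> Prop :=
| ms_bind a a' x : x < k -> pr a a' -> match_step k (a, Mat x) (EBind x a') []
| ms_same x y : k <= x -> x - k = y -> match_step k (Mat y, Mat x) EKeep []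
| ms_dat a1 a1' a2 a2' p1 p1' p2 p2' :
    pr a1 a1' -> pr a2 a2' -> pr p1 p1' -> pr p2 p2' ->
    match_step k (Dat a1 a2, Dat p1 p2) EKeep [(a1', p1'); (a2', p2')]
| ms_fail a p : failure k a p -> match_step k (a, p) EFail [].

Lemma pr_match_step b b' k mu mu' Dl Dl' q Dr Dr' e E :
  match_step k q e E -> pr b b' -> pr_dm mu mu' -> pr_D Dl Dl' -> pr_D Dr Dr' ->
  pr (Mtc b k mu (Dl ++ q :: Dr)) (Mtc b' k (apply_effect e mu') (Dl' ++ E ++ Dr')).
Proof.
  destruct 1; intros; simpl.
  - apply pr_match_bind; auto.
  - apply pr_match_same; auto.
  - apply pr_match_dat; auto.
  - apply pr_match_fail; auto.
Qed.

Lemma pr_Var_inv i t : pr (Var i) t -> t = Var i.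
Proof. inversion 1; auto. Qed.

Lemma pr_Mat_inv i t : pr (Mat i) t -> t = Mat i.
Proof. inversion 1; auto. Qed.

Lemma pr_Dat_inv a b t : pr (Dat a b) t -> exists a' b', t = Dat a' b' /\ pr a a' /\ pr b b'.
Proof. inversion 1; subst; eauto using pr_id. Qed.

Lemma pr_Abs_inv k p b t : pr (Abs k p b) t ->
  exists p' b', t = Abs k p' b' /\ pr p p' /\ pr b b'.
Proof. inversion 1; subst; eauto using pr_id. Qed.

Inductive app_reduct (u v : term) : term -> Prop :=
| ar_cgr u' v' : pr u u' -> pr v v' -> app_reduct u v (App u' v')
| ar_init k p b p' b' v' : u = Abs k p b -> pr p p' -> pr b b' -> pr v v' ->
    app_reduct u v (Mtc b' k (Some []) [(v', p')])
| ar_struct_m x v' : u = Mat x -> pr v v' -> app_reduct u v (Dat (Mat x) v')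
| ar_struct_d u1 u2 u1' u2' v' : u = Dat u1 u2 -> pr u1 u1' -> pr u2 u2' -> pr v v' ->
    app_reduct u v (Dat (Dat u1' u2') v').

Lemma pr_App_inv u v t : pr (App u v) t -> app_reduct u v t.
Proof. inversion 1; subst; eauto using app_reduct, pr_id. Qed.

Inductive mtc_reduct (b : term) (k : nat) (mu : dmatch) (D : list (term * term)) : term -> Prop :=
| mr_cgr b' mu' D' : pr b b' -> pr_dm mu mu' -> pr_D D D' ->
    mtc_reduct b k mu D (Mtc b' k mu' D')
| mr_step b' mu' Dl Dl' q Dr Dr' e E : D = Dl ++ q :: Dr -> match_step k q e E ->
    pr b b' -> pr_dm mu mu' -> pr_D Dl Dl' -> pr_D Dr Dr' ->
    mtc_reduct b k mu D (Mtc b' k (apply_effect e mu') (Dl' ++ E ++ Dr'))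
| mr_res s b' s' : mu = Some s -> D = [] -> dom_is k s -> pr b b' -> pr_os s s' ->
    mtc_reduct b k mu D (inst k s' b')
| mr_res_dom s : mu = Some s -> D = [] -> ~ dom_is k s -> mtc_reduct b k mu D botT
| mr_res_bot : mu = None -> mtc_reduct b k mu D botT.

Lemma pr_Mtc_inv b k mu D t : pr (Mtc b k mu D) t -> mtc_reduct b k mu D t.
Proof.
  inversion 1; subst.
  - apply mr_cgr; auto using pr_id, pr_dm_refl, pr_D_refl.
  - apply mr_cgr; auto.
  - eapply mr_step with (e := EBind x a') (E := []); eauto using match_step.
  - eapply mr_step with (e := EKeep) (E := []); eauto using match_step.
  - eapply mr_step with (e := EKeep) (E := [(_, _); (_, _)]); eauto using match_step.
  - eapply mr_step with (e := EFail) (E := []); eauto using match_step, pr_dm_refl.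
  - eapply mr_res; eauto.
  - eapply mr_res_dom; eauto.
  - apply mr_res_bot; auto.
Qed.

Definition joinable (t1 t2 : term) : Prop := exists t3, pr t1 t3 /\ pr t2 t3.

Definition diamond (t : term) : Prop :=
  forall t1 t2, pr t t1 -> pr t t2 -> joinable t1 t2.

Lemma joinable_sym t1 t2 : joinable t1 t2 -> joinable t2 t1.
Proof. intros (t3 & H1 & H2); exists t3; auto. Qed.

Lemma pr_joinable t1 t2 : pr t1 t2 -> joinable t1 t2.
Proof. exists t2; auto using pr_id. Qed.

Lemma join_os s s1 s2 : Forall (on_some diamond) s -> pr_os s s1 -> pr_os s s2 ->
  exists s3, pr_os s1 s3 /\ pr_os s2 s3.
Proof.
  intros Is H1; revert s2; induction H1 as [|s s1 H1 IH|t t1 s s1 Ht1 H1 IH]; intros s2 H2.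
  - inversion H2; exists []; split; constructor.
  - inversion H2 as [|? s2' H2'|]; subst.
    destruct (IH (Forall_inv_tail Is) _ H2') as (s3 & A1 & A2).
    exists (None :: s3); split; constructor; auto.
  - inversion H2 as [| |? t2 ? s2' Ht2 H2']; subst.
    destruct (IH (Forall_inv_tail Is) _ H2') as (s3 & A1 & A2).
    destruct (Forall_inv Is _ _ Ht1 Ht2) as (t3 & B1 & B2).
    exists (Some t3 :: s3); split; constructor; auto.
Qed.

Lemma join_dm mu mu1 mu2 : on_dmatch diamond mu -> pr_dm mu mu1 -> pr_dm mu mu2 ->
  exists mu3, pr_dm mu1 mu3 /\ pr_dm mu2 mu3.
Proof.
  intros Imu H1 H2; destruct H1 as [|s s1 H1]; inversion H2 as [|? s2 H2']; subst.
  - exists None; split; constructor.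
  - destruct (join_os _ _ _ Imu H1 H2') as (s3 & A1 & A2).
    exists (Some s3); split; constructor; auto.
Qed.

Lemma join_D D D1 D2 : on_pairs diamond D -> pr_D D D1 -> pr_D D D2 ->
  exists D3, pr_D D1 D3 /\ pr_D D2 D3.
Proof.
  intros ID H1; revert D2; induction H1 as [|a a1 p p1 D D1 Ha1 Hp1 H1 IH]; intros D2 H2.
  - inversion H2; exists []; split; constructor.
  - inversion H2 as [|? a2 ? p2 ? D2' Ha2 Hp2 H2']; subst.
    destruct (Forall_inv ID) as [Ia Ip].
    destruct (IH (Forall_inv_tail ID) _ H2') as (D3 & A1 & A2).
    destruct (Ia _ _ Ha1 Ha2) as (a3 & B1 & B2).
    destruct (Ip _ _ Hp1 Hp2) as (p3 & C1 & C2).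
    exists ((a3, p3) :: D3); split; constructor; auto.
Qed.

Lemma failure_pr k a p a' p' : failure k a p -> pr a a' -> pr p p' -> failure k a' p'.
Proof.
  intros Hf Ha Hp; destruct Hf.
  - apply pr_Mat_inv in Ha, Hp; subst; constructor; auto.
  - apply pr_Mat_inv in Hp; apply pr_Dat_inv in Ha as (? & ? & -> & _); subst; constructor; auto.
  - apply pr_Mat_inv in Hp; apply pr_Abs_inv in Ha as (? & ? & -> & _); subst; constructor; auto.
  - apply pr_Mat_inv in Ha; apply pr_Dat_inv in Hp as (? & ? & -> & _); subst; constructor.
  - apply pr_Abs_inv in Ha as (? & ? & -> & _); apply pr_Dat_inv in Hp as (? & ? & -> & _);
      constructor.
  - apply pr_Abs_inv in Hp as (? & ? & -> & _); constructor.
Qed.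

Lemma join_Dat a1 a2 x1 x2 y1 y2 : diamond (Dat a1 a2) ->
  pr (Dat a1 a2) (Dat x1 x2) -> pr (Dat a1 a2) (Dat y1 y2) ->
  exists z1 z2, pr x1 z1 /\ pr x2 z2 /\ pr y1 z1 /\ pr y2 z2.
Proof.
  intros I H1 H2; destruct (I _ _ H1 H2) as (w & W1 & W2).
  apply pr_Dat_inv in W1 as (z1 & z2 & -> & Z1 & Z2).
  apply pr_Dat_inv in W2 as (? & ? & E & Z3 & Z4); injection E as <- <-.
  exists z1, z2; auto.
Qed.

Lemma join_Abs k p b p1 b1 p2 b2 : diamond (Abs k p b) ->
  pr (Abs k p b) (Abs k p1 b1) -> pr (Abs k p b) (Abs k p2 b2) ->
  exists p3 b3, pr p1 p3 /\ pr b1 b3 /\ pr p2 p3 /\ pr b2 b3.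
Proof.
  intros I H1 H2; destruct (I _ _ H1 H2) as (w & W1 & W2).
  apply pr_Abs_inv in W1 as (p3 & b3 & -> & P1 & B1).
  apply pr_Abs_inv in W2 as (? & ? & E & P2 & B2); injection E as <- <-.
  exists p3, b3; auto.
Qed.

Lemma match_step_pr k a p e E a1 p1 : diamond a -> diamond p ->
  match_step k (a, p) e E -> pr a a1 -> pr p p1 ->
  exists e3 E3, match_step k (a1, p1) e3 E3 /\ pr_effect e e3 /\ pr_D E E3.
Proof.
  intros Ia Ip S Ha Hp; inversion S as [? a' x Hx Ha'|x y Hx Hy|
    ? a1' ? a2' ? p1' ? p2' Q1 Q2 Q3 Q4|? ? Hf]; subst.
  - apply pr_Mat_inv in Hp; subst; destruct (Ia _ _ Ha Ha') as (a3 & A1 & A2).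
    exists (EBind x a3), []; repeat constructor; auto.
  - apply pr_Mat_inv in Ha, Hp; subst; exists EKeep, []; repeat constructor; auto.
  - pose proof Ha as Ha0; pose proof Hp as Hp0.
    apply pr_Dat_inv in Ha as (x1 & x2 & -> & _), Hp as (y1 & y2 & -> & _).
    destruct (join_Dat _ _ _ _ _ _ Ia Ha0 (pr_dat _ _ _ _ Q1 Q2)) as (z1 & z2 & Z1 & Z2 & Z3 & Z4).
    destruct (join_Dat _ _ _ _ _ _ Ip Hp0 (pr_dat _ _ _ _ Q3 Q4)) as (w1 & w2 & W1 & W2 & W3 & W4).
    exists EKeep, [(z1, w1); (z2, w2)]; repeat constructor; auto.
  - exists EFail, []; repeat constructor; eauto using failure_pr.
Qed.

Lemma match_step_join k q e1 E1 e2 E2 : diamond (fst q) -> diamond (snd q) ->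
  match_step k q e1 E1 -> match_step k q e2 E2 ->
  exists e3 E3, pr_effect e1 e3 /\ pr_effect e2 e3 /\ pr_D E1 E3 /\ pr_D E2 E3.
Proof.
  intros Ia Ip S1 S2; destruct S1 as [a a1 x Hx Ha1|x y Hx Hy|
    a1 a1' a2 a2' p1 p1' p2 p2' Q1 Q2 Q3 Q4|a p Hf]; simpl in *;
    inversion S2 as [? c ? ? Ha2|? ? ? ?|? b1' ? b2' ? r1' ? r2' R1 R2 R3 R4|? ? Hf'];
    subst; try lia; try (inversion Hf; lia); try (inversion Hf'; lia).
  - destruct (Ia _ _ Ha1 Ha2) as (a3 & A1 & A2).
    exists (EBind x a3), []; repeat constructor; auto.
  - exists EKeep, []; repeat constructor.
  - destruct (join_Dat _ _ _ _ _ _ Ia (pr_dat _ _ _ _ Q1 Q2) (pr_dat _ _ _ _ R1 R2))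
      as (z1 & z2 & Z1 & Z2 & Z3 & Z4).
    destruct (join_Dat _ _ _ _ _ _ Ip (pr_dat _ _ _ _ Q3 Q4) (pr_dat _ _ _ _ R3 R4))
      as (w1 & w2 & W1 & W2 & W3 & W4).
    exists EKeep, [(z1, w1); (z2, w2)]; repeat constructor; auto.
  - exists EFail, []; repeat constructor.
Qed.

Lemma pr_D_app D1 D1' D2 D2' : pr_D D1 D1' -> pr_D D2 D2' -> pr_D (D1 ++ D2) (D1' ++ D2').
Proof. induction 1; simpl; auto; constructor; auto. Qed.

Lemma pr_D_app_inv D1 D2 D' : pr_D (D1 ++ D2) D' ->
  exists D1' D2', D' = D1' ++ D2' /\ pr_D D1 D1' /\ pr_D D2 D2'.
Proof.
  revert D'; induction D1 as [|[a p] D1 IH]; intros D' H; simpl in *.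
  - exists [], D'; repeat split; auto; constructor.
  - inversion H as [|? a' ? p' ? D'' Ha Hp H']; subst.
    destruct (IH _ H') as (D1' & D2' & -> & H1 & H2).
    exists ((a', p') :: D1'), D2'; repeat split; auto; constructor; auto.
Qed.

Lemma pr_D_split Dl a p Dr D' : pr_D (Dl ++ (a, p) :: Dr) D' ->
  exists Dl' a' p' Dr', D' = Dl' ++ (a', p') :: Dr' /\
    pr_D Dl Dl' /\ pr a a' /\ pr p p' /\ pr_D Dr Dr'.
Proof.
  intro H; destruct (pr_D_app_inv _ _ _ H) as (Dl' & D2' & -> & Hl & H2).
  inversion H2; subst; eexists _, _, _, _; eauto.
Qed.

Lemma app_cons_cases {T} (l1 l2 r1 r2 : list T) (x y : T) : l1 ++ x :: r1 = l2 ++ y :: r2 ->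
  (l1 = l2 /\ x = y /\ r1 = r2) \/
  (exists B, l2 = l1 ++ x :: B /\ r1 = B ++ y :: r2) \/
  (exists B, l1 = l2 ++ y :: B /\ r2 = B ++ x :: r1).
Proof.
  revert l2; induction l1 as [|a l1 IH]; intros [|b l2] E; simpl in *; injection E as -> E.
  - auto.
  - right; left; exists l2; auto.
  - right; right; exists l1; auto.
  - destruct (IH _ E) as [(-> & -> & ->)|[(B & -> & ->)|(B & -> & ->)]]; eauto 6.
Qed.

Lemma pr_os_dom k s s' : pr_os s s' -> dom_is k s <-> dom_is k s'.
Proof.
  intro H; enough (E : forall i, nth i s None = None <-> nth i s' None = None).
  { unfold dom_is; split; intros Hd i; rewrite <- Hd; specialize (E i); tauto. }
  induction H; intros [|i]; simpl; auto; split; congruence.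
Qed.

Lemma mtc_bot_reduct_pr b k mu D t : mu = None -> mtc_reduct b k mu D t -> pr t botT.
Proof.
  intros ->; destruct 1 as [b' mu' D' _ Hmu _|b' mu' Dl Dl' q Dr Dr' e E _ _ _ Hmu _ _| | |];
    try discriminate; try apply pr_id.
  - inversion Hmu; apply pr_res_bot.
  - inversion Hmu; rewrite apply_effect_bot; apply pr_res_bot.
Qed.

Lemma mtc_wrong_domain_reduct_pr b k mu D s t : mu = Some s -> D = [] -> ~ dom_is k s ->
  mtc_reduct b k mu D t -> pr t botT.
Proof.
  intros -> -> Hs; destruct 1 as [b' mu' D' _ Hmu HD|? ? Dl ? q ? ? ? ? HD| s0 ? ? E _ Hs0| |];
    try discriminate; try apply pr_id.
  - inversion Hmu as [|? s' Hs']; inversion HD; subst.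
    apply pr_res_dom; rewrite <- (pr_os_dom k _ _ Hs'); auto.
  - apply app_cons_not_nil in HD; contradiction.
  - injection E as ->; contradiction.
Qed.

Section MatchingDiamond.

Variables (b : term) (k : nat) (mu : dmatch).
Hypothesis Ib : diamond b.
Hypothesis Imu : on_dmatch diamond mu.

Lemma join_cgr_step D b1 mu1 D1 Dl q Dr e E b2 mu2 Dl2 Dr2 :
  on_pairs diamond D -> D = Dl ++ q :: Dr ->
  pr b b1 -> pr_dm mu mu1 -> pr_D D D1 ->
  match_step k q e E -> pr b b2 -> pr_dm mu mu2 -> pr_D Dl Dl2 -> pr_D Dr Dr2 ->
  joinable (Mtc b1 k mu1 D1) (Mtc b2 k (apply_effect e mu2) (Dl2 ++ E ++ Dr2)).
Proof.
  intros ID -> Hb1 Hm1 HD1 S Hb2 Hm2 HL2 HR2; destruct q as [a p].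
  apply Forall_app in ID as [IL IR]; inversion IR as [|? ? [Ia Ip] IR']; subst.
  destruct (pr_D_split _ _ _ _ _ HD1) as (Dl1 & a1 & p1 & Dr1 & -> & HL1 & Ha1 & Hp1 & HR1).
  destruct (match_step_pr _ _ _ _ _ _ _ Ia Ip S Ha1 Hp1) as (e3 & E3 & S3 & He & HE).
  destruct (join_D _ _ _ IL HL1 HL2) as (L3 & X1 & X2).
  destruct (join_D _ _ _ IR' HR1 HR2) as (R3 & Y1 & Y2).
  destruct (Ib _ _ Hb1 Hb2) as (b3 & W1 & W2).
  destruct (join_dm _ _ _ Imu Hm1 Hm2) as (mu3 & M1 & M2).
  exists (Mtc b3 k (apply_effect e3 mu3) (L3 ++ E3 ++ R3)); split.
  - apply pr_match_step; auto.
  - apply pr_mtc; auto using pr_dm_apply_effect, pr_D_app.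
Qed.

Lemma join_steps_apart A q B q' C b1 mu1 Dl1 Dr1 e1 E1 b2 mu2 Dl2 Dr2 e2 E2 :
  on_pairs diamond (A ++ q :: B ++ q' :: C) ->
  match_step k q e1 E1 -> pr b b1 -> pr_dm mu mu1 -> pr_D A Dl1 -> pr_D (B ++ q' :: C) Dr1 ->
  match_step k q' e2 E2 -> pr b b2 -> pr_dm mu mu2 -> pr_D (A ++ q :: B) Dl2 -> pr_D C Dr2 ->
  joinable (Mtc b1 k (apply_effect e1 mu1) (Dl1 ++ E1 ++ Dr1))
           (Mtc b2 k (apply_effect e2 mu2) (Dl2 ++ E2 ++ Dr2)).
Proof.
  intros ID S1 Hb1 Hm1 HA1 HR1 S2 Hb2 Hm2 HL2 HC2; destruct q as [a p], q' as [a' p'].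
  apply Forall_app in ID as [IA ID]; inversion ID as [|? ? [Ia Ip] ID']; subst.
  apply Forall_app in ID' as [IB IC]; inversion IC as [|? ? [Ia' Ip'] IC']; subst.
  destruct (pr_D_split _ _ _ _ _ HR1) as (B1 & a'1 & p'1 & C1 & -> & HB1 & Ha'1 & Hp'1 & HC1).
  destruct (pr_D_split _ _ _ _ _ HL2) as (A2 & a2 & p2 & B2 & -> & HA2 & Ha2 & Hp2 & HB2).
  destruct (match_step_pr _ _ _ _ _ _ _ Ia Ip S1 Ha2 Hp2) as (e1' & E1' & S1' & He1 & HE1).
  destruct (match_step_pr _ _ _ _ _ _ _ Ia' Ip' S2 Ha'1 Hp'1) as (e2' & E2' & S2' & He2 & HE2).
  destruct (join_D _ _ _ IA HA1 HA2) as (A3 & X1 & X2).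
  destruct (join_D _ _ _ IB HB1 HB2) as (B3 & Y1 & Y2).
  destruct (join_D _ _ _ IC' HC1 HC2) as (C3 & Z1 & Z2).
  destruct (Ib _ _ Hb1 Hb2) as (b3 & W1 & W2).
  destruct (join_dm _ _ _ Imu Hm1 Hm2) as (mu3 & M1 & M2).
  exists (Mtc b3 k (apply_effect e2' (apply_effect e1' mu3)) ((A3 ++ E1' ++ B3) ++ E2' ++ C3)).
  split.
  - replace (Dl1 ++ E1 ++ B1 ++ (a'1, p'1) :: C1)
      with ((Dl1 ++ E1 ++ B1) ++ (a'1, p'1) :: C1) by (rewrite <- !app_assoc; reflexivity).
    apply pr_match_step; auto using pr_dm_apply_effect, pr_D_app.
  - rewrite <- !app_assoc, apply_effect_comm; simpl.
    apply pr_match_step; auto using pr_dm_apply_effect, pr_D_app.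
Qed.

Lemma join_step_step Dl1 q1 Dr1 Dl2 q2 Dr2 b1 mu1 Dl1' Dr1' e1 E1 b2 mu2 Dl2' Dr2' e2 E2 :
  on_pairs diamond (Dl1 ++ q1 :: Dr1) -> Dl1 ++ q1 :: Dr1 = Dl2 ++ q2 :: Dr2 ->
  match_step k q1 e1 E1 -> pr b b1 -> pr_dm mu mu1 -> pr_D Dl1 Dl1' -> pr_D Dr1 Dr1' ->
  match_step k q2 e2 E2 -> pr b b2 -> pr_dm mu mu2 -> pr_D Dl2 Dl2' -> pr_D Dr2 Dr2' ->
  joinable (Mtc b1 k (apply_effect e1 mu1) (Dl1' ++ E1 ++ Dr1'))
           (Mtc b2 k (apply_effect e2 mu2) (Dl2' ++ E2 ++ Dr2')).
Proof.
  intros ID HD S1 Hb1 Hm1 HL1 HR1 S2 Hb2 Hm2 HL2 HR2.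
  destruct (app_cons_cases _ _ _ _ _ _ HD) as [(<- & <- & <-)|[(B & -> & ->)|(B & -> & ->)]].
  - apply Forall_app in ID as [IL IR]; inversion IR as [|? ? [Ia Ip] IR']; subst.
    destruct (match_step_join _ _ _ _ _ _ Ia Ip S1 S2) as (e3 & E3 & He1 & He2 & HE1 & HE2).
    destruct (join_D _ _ _ IL HL1 HL2) as (L3 & X1 & X2).
    destruct (join_D _ _ _ IR' HR1 HR2) as (R3 & Y1 & Y2).
    destruct (Ib _ _ Hb1 Hb2) as (b3 & W1 & W2).
    destruct (join_dm _ _ _ Imu Hm1 Hm2) as (mu3 & M1 & M2).
    exists (Mtc b3 k (apply_effect e3 mu3) (L3 ++ E3 ++ R3));
      split; apply pr_mtc; auto using pr_dm_apply_effect, pr_D_app.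
  - eapply join_steps_apart; eauto.
  - apply joinable_sym; eapply join_steps_apart; eauto.
    rewrite <- app_assoc in ID; exact ID.
Qed.

Lemma join_cgr_res s b1 mu1 D1 b2 s2 :
  mu = Some s -> pr b b1 -> pr_dm mu mu1 -> pr_D [] D1 ->
  dom_is k s -> pr b b2 -> pr_os s s2 ->
  joinable (Mtc b1 k mu1 D1) (inst k s2 b2).
Proof.
  intros -> Hb1 Hm1 HD1 Hd Hb2 Hs2.
  inversion HD1; inversion Hm1 as [|? s1 Hs1]; subst.
  destruct (Ib _ _ Hb1 Hb2) as (b3 & W1 & W2).
  destruct (join_os _ _ _ Imu Hs1 Hs2) as (s3 & M1 & M2).
  exists (inst k s3 b3); split.
  - apply pr_res; auto; apply (pr_os_dom k _ _ Hs1); auto.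
  - apply pr_inst; auto.
Qed.

Lemma mtc_diamond D : on_pairs diamond D -> diamond (Mtc b k mu D).
Proof.
  intros ID t1 t2 H1 H2; apply pr_Mtc_inv in H1, H2.
  (* A reduct bot produced by (Res) is joined at bot: the other side reduces to it. *)
  pose proof H1 as R1; pose proof H2 as R2.
  destruct H2 as [b2 mu2 D2 Hb2 Hm2 HD2
                 |b2 mu2 Dl2 Dl2' q2 Dr2 Dr2' e2 E2 HD2 S2 Hb2 Hm2 HL2 HR2
                 |s2 b2 s2' Es2 HD2 Hd2 Hb2 Hs2|s Es ED Hs|Emu];
    [| | |apply pr_joinable; eapply (mtc_wrong_domain_reduct_pr _ _ _ _ s); eauto
         |apply pr_joinable; eapply mtc_bot_reduct_pr; eauto].
  all: destruct H1 as [b1 mu1 D1 Hb1 Hm1 HD1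
                      |b1 mu1 Dl1 Dl1' q1 Dr1 Dr1' e1 E1 HD1 S1 Hb1 Hm1 HL1 HR1
                      |s1 b1 s1' Es1 HD1 Hd1 Hb1 Hs1|s Es ED Hs|Emu];
    [| | |apply joinable_sym, pr_joinable; eapply (mtc_wrong_domain_reduct_pr _ _ _ _ s); eauto
         |apply joinable_sym, pr_joinable; eapply mtc_bot_reduct_pr; eauto].
  - destruct (Ib _ _ Hb1 Hb2) as (b3 & W1 & W2).
    destruct (join_dm _ _ _ Imu Hm1 Hm2) as (mu3 & M1 & M2).
    destruct (join_D _ _ _ ID HD1 HD2) as (D3 & X1 & X2).
    exists (Mtc b3 k mu3 D3); split; apply pr_mtc; auto.
  - apply joinable_sym; eapply join_cgr_step; eauto.
  - subst D; apply joinable_sym; eapply join_cgr_res; eauto.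
  - eapply join_cgr_step; eauto.
  - subst D; eapply join_step_step; eauto.
  - rewrite HD1 in HD2; apply app_cons_not_nil in HD2; contradiction.
  - subst D; eapply join_cgr_res; eauto.
  - rewrite HD2 in HD1; apply app_cons_not_nil in HD1; contradiction.
  - rewrite Es1 in Es2; injection Es2 as <-; subst mu.
    destruct (Ib _ _ Hb1 Hb2) as (b3 & W1 & W2).
    destruct (join_os _ _ _ Imu Hs1 Hs2) as (s3 & M1 & M2).
    exists (inst k s3 b3); split; apply pr_inst; auto.
Qed.

End MatchingDiamond.

Section ApplicationDiamond.

Variables u v : term.
Hypothesis Iu : diamond u.
Hypothesis Iv : diamond v.

Lemma join_init_init k p b p1 b1 v1 p2 b2 v2 : u = Abs k p b ->
  pr p p1 -> pr b b1 -> pr v v1 -> pr p p2 -> pr b b2 -> pr v v2 ->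
  joinable (Mtc b1 k (Some []) [(v1, p1)]) (Mtc b2 k (Some []) [(v2, p2)]).
Proof.
  intros -> Hp1 Hb1 Hv1 Hp2 Hb2 Hv2.
  destruct (join_Abs _ _ _ _ _ _ _ Iu (pr_abs _ _ _ _ _ Hp1 Hb1) (pr_abs _ _ _ _ _ Hp2 Hb2))
    as (p3 & b3 & P1 & B1 & P2 & B2).
  destruct (Iv _ _ Hv1 Hv2) as (v3 & V1 & V2).
  exists (Mtc b3 k (Some []) [(v3, p3)]); split;
    apply pr_mtc; repeat constructor; auto.
Qed.

Lemma join_cgr_init u1 v1 k p b p2 b2 v2 : pr u u1 -> pr v v1 ->
  u = Abs k p b -> pr p p2 -> pr b b2 -> pr v v2 ->
  joinable (App u1 v1) (Mtc b2 k (Some []) [(v2, p2)]).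
Proof.
  intros Hu1 Hv1 -> Hp2 Hb2 Hv2; pose proof Hu1 as Hu1'.
  apply pr_Abs_inv in Hu1' as (p1 & b1 & -> & P1 & B1).
  destruct (join_Abs _ _ _ _ _ _ _ Iu Hu1 (pr_abs _ _ _ _ _ Hp2 Hb2))
    as (p3 & b3 & P3 & B3 & P4 & B4).
  destruct (Iv _ _ Hv1 Hv2) as (v3 & V1 & V2).
  exists (Mtc b3 k (Some []) [(v3, p3)]); split.
  - apply pr_init; auto.
  - apply pr_mtc; repeat constructor; auto.
Qed.

Lemma join_cgr_struct_m u1 v1 x v2 : pr u u1 -> pr v v1 -> u = Mat x -> pr v v2 ->
  joinable (App u1 v1) (Dat (Mat x) v2).
Proof.
  intros Hu1 Hv1 -> Hv2; apply pr_Mat_inv in Hu1 as ->.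
  destruct (Iv _ _ Hv1 Hv2) as (v3 & V1 & V2).
  exists (Dat (Mat x) v3); split; constructor; auto using pr_id.
Qed.

Lemma join_cgr_struct_d u1 v1 a1 a2 a1' a2' v2 : pr u u1 -> pr v v1 ->
  u = Dat a1 a2 -> pr a1 a1' -> pr a2 a2' -> pr v v2 ->
  joinable (App u1 v1) (Dat (Dat a1' a2') v2).
Proof.
  intros Hu1 Hv1 -> Ha1 Ha2 Hv2; pose proof Hu1 as Hu1'.
  apply pr_Dat_inv in Hu1' as (x1 & x2 & -> & _).
  destruct (join_Dat _ _ _ _ _ _ Iu Hu1 (pr_dat _ _ _ _ Ha1 Ha2))
    as (z1 & z2 & Z1 & Z2 & Z3 & Z4).
  destruct (Iv _ _ Hv1 Hv2) as (v3 & V1 & V2).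
  exists (Dat (Dat z1 z2) v3); split; repeat constructor; auto.
Qed.

Lemma app_diamond : diamond (App u v).
Proof.
  intros t1 t2 H1 H2; apply pr_App_inv in H1, H2.
  destruct H1 as [u1 v1 Hu1 Hv1|k p b p1 b1 v1 Eu Hp1 Hb1 Hv1|x v1 Eu Hv1|
                  a1 a2 a1' a2' v1 Eu Ha1 Ha2 Hv1];
  destruct H2 as [u2 v2 Hu2 Hv2|k' p' b' p2 b2 v2 Eu' Hp2 Hb2 Hv2|x' v2 Eu' Hv2|
                  c1 c2 c1' c2' v2 Eu' Hc1 Hc2 Hv2];
    try (rewrite Eu in Eu'; discriminate);
    try (rewrite Eu in Eu'; injection Eu' as <- <- <-);
    try (rewrite Eu in Eu'; injection Eu' as <- <-);
    try (rewrite Eu in Eu'; injection Eu' as <-).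
  - destruct (Iu _ _ Hu1 Hu2) as (u3 & U1 & U2).
    destruct (Iv _ _ Hv1 Hv2) as (v3 & V1 & V2).
    exists (App u3 v3); split; constructor; auto.
  - eapply join_cgr_init; eauto.
  - eapply join_cgr_struct_m; eauto.
  - eapply join_cgr_struct_d; eauto.
  - apply joinable_sym; eapply join_cgr_init; eauto.
  - eapply join_init_init; eauto.
  - apply joinable_sym; eapply join_cgr_struct_m; eauto.
  - destruct (Iv _ _ Hv1 Hv2) as (v3 & V1 & V2).
    exists (Dat (Mat x) v3); split; constructor; auto using pr_id.
  - apply joinable_sym; eapply join_cgr_struct_d; eauto.
  - rewrite Eu in Iu.
    destruct (join_Dat _ _ _ _ _ _ Iu (pr_dat _ _ _ _ Ha1 Ha2) (pr_dat _ _ _ _ Hc1 Hc2))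
      as (z1 & z2 & Z1 & Z2 & Z3 & Z4).
    destruct (Iv _ _ Hv1 Hv2) as (v3 & V1 & V2).
    exists (Dat (Dat z1 z2) v3); split; repeat constructor; auto.
Qed.

End ApplicationDiamond.

Lemma pr_diamond t : diamond t.
Proof.
  induction t as [i|i|u v Iu Iv|a b Ia Ib|k p b Ip Ib|b k mu D Ib Imu ID]
    using term_nested_ind; intros t1 t2 H1 H2.
  - apply pr_Var_inv in H1, H2; subst; apply pr_joinable, pr_id.
  - apply pr_Mat_inv in H1, H2; subst; apply pr_joinable, pr_id.
  - exact (app_diamond u v Iu Iv _ _ H1 H2).
  - apply pr_Dat_inv in H1 as (a1 & b1 & -> & A1 & B1), H2 as (a2 & b2 & -> & A2 & B2).
    destruct (Ia _ _ A1 A2) as (a3 & ? & ?), (Ib _ _ B1 B2) as (b3 & ? & ?).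
    exists (Dat a3 b3); split; constructor; auto.
  - apply pr_Abs_inv in H1 as (p1 & b1 & -> & P1 & B1), H2 as (p2 & b2 & -> & P2 & B2).
    destruct (Ip _ _ P1 P2) as (p3 & ? & ?), (Ib _ _ B1 B2) as (b3 & ? & ?).
    exists (Abs k p3 b3); split; constructor; auto.
  - exact (mtc_diamond b k mu Ib Imu D ID _ _ H1 H2).
Qed.

Theorem lemma3 : forall t t1 t2 : term,
  pr t t1 -> pr t t2 -> exists t3, pr t1 t3 /\ pr t2 t3.
Proof. intros t; apply pr_diamond. Qed.
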